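(* For each $n\in\omega$ let $\tau_n$ be the order topology on $A_n$ induced by $\leq_n$. Then in $\mathcal{N}_{\mathbb{R}}$ each space $\langle A_n,\tau_n\rangle$ is metrizable and the family $\{\langle A_n,\tau_n\rangle:n\in\omega\}$ is denumerable, but the direct sum $\bigoplus_{n\in\omega}\langle A_n,\tau_n\rangle$ is not metrizable in $\mathcal{N}_{\mathbb{R}}$. In consequence, for the metrics $d_n(a_{n,x},a_{n,y})=|x-y|$ on $A_n$, the family $\{d_n:n\in\omega\}$ does not belong to $\mathcal{N}_{\mathbb{R}}$, and $\mathbf{CSM}_{le}$ is false in $\mathcal{N}_{\mathbb{R}}$.
   Context: Permutation model $\mathcal{N}_{\mathbb{R}}$: Let $\mathcal{M}$ be a model of $\mathbf{ZFA}+\mathbf{AC}$ whose set of atoms is $A=\bigcup_{n\in\omega}A_n$, a pairwise disjoint union, where $A_n=\{a_{n,x}:x\in\mathbb{R}\}$ and $x\mapsto a_{n,x}$ is a bijection (in $\mathcal{M}$). Let $\leq_n$ be the linear order on $A_n$ given by $a_{n,x}\leq_n a_{n,y}\iff x\le y$. Let $\mathcal{G}$ be the group of all permutations $\pi$ of $A$ such that for every $n$, $\pi\upharpoonright A_n$ is an order-automorphism of $\langle A_n,\leq_n\rangle$. Let $\mathcal{I}$ be the ideal of all $E\subseteq A$ with $E\subseteq\bigcup_{n\in S}A_n$ for some finite $S\subseteq\omega$. Then $\mathcal{N}_{\mathbb{R}}$ is the class of all $x\in\mathcal{M}$ such that every $t\in\mathrm{TC}(\{x\})$ has a support $E\in\mathcal{I}$,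 i.e. every $\phi\in\mathcal{G}$ fixing $E$ pointwise satisfies $\phi(t)=t$ (permutations acting on $\mathcal{M}$ via their $\in$-automorphism extensions). $\mathbf{CSM}_{le}$: every countable direct sum of metrizable spaces is metrizable. *)

(* Internal (semantic) description of the permutation model N_R. *)
From Stdlib Require Import Reals List.
Open Scope R_scope.

(* Atoms: a_{n,x} is represented by the pair (n, x). *)
Definition atom : Type := (nat * R)%type.

Definition A_ (n : nat) (a : atom) : Prop := fst a = n.

Definition order_aut (f : R -> R) : Prop :=
  (forall x y, x <= y <-> f x <= f y) /\ (forall y, exists x, f x = y).

Definition inG (p : atom -> atom) : Prop :=
  exists f : nat -> R -> R, (forall n, order_aut (f n)) /\
    forall a, p a = (fst a, f (fst a) (snd a)).

(* p fixes pointwise the support  U_{n in S} A_n  (S a finite set of indices) *)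
Definition fixes (p : atom -> atom) (S : list nat) : Prop :=
  forall a, In (fst a) S -> p a = a.

(* A set of atoms U belongs to N_R (has a finite support). *)
Definition sym_set (U : atom -> Prop) : Prop :=
  exists S : list nat, forall p, inG p -> fixes p S ->
    forall a, U (p a) <-> U a.

(* A real-valued function on X x X belongs to N_R. *)
Definition sym_fun (X : atom -> Prop) (d : atom -> atom -> R) : Prop :=
  exists S : list nat, forall p, inG p -> fixes p S ->
    forall a b, X a -> X b -> d (p a) (p b) = d a b.

Definition is_metric_on (X : atom -> Prop) (d : atom -> atom -> R) : Prop :=
  (forall a b, X a -> X b -> 0 <= d a b) /\
  (forall a b, X a -> X b -> (d a b = 0 <-> a = b)) /\
  (forall a b, X a -> X b -> d a b = d b a) /\
  (forall a b c, X a -> X b -> X c -> d a c <= d a b + d b c).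

Definition metric_open (X : atom -> Prop) (d : atom -> atom -> R)
  (U : atom -> Prop) : Prop :=
  (forall a, U a -> X a) /\
  forall a, U a -> exists e, 0 < e /\ forall b, X b -> d a b < e -> U b.

(* tau_n : order topology of (A_n, <=_n) (basis: open intervals; no endpoints) *)
Definition order_open (n : nat) (U : atom -> Prop) : Prop :=
  (forall a, U a -> A_ n a) /\
  forall a, U a -> exists l u, l < snd a < u /\
    forall b, A_ n b -> l < snd b < u -> U b.

(* topology of the direct sum  (+)_n <A_n, tau_n>, carrier A = U_n A_n *)
Definition sum_open (U : atom -> Prop) : Prop :=
  forall n, order_open n (fun a => U a /\ A_ n a).

Definition allA (a : atom) : Prop := True.

(* <X, open> is metrizable in N_R: there is a metric on X lying in N_R
   whose topology (computed in N_R, i.e. over the sets in N_R) is the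
   given topology (computed in N_R). *)
Definition metrizable_in_N (X : atom -> Prop) (open : (atom -> Prop) -> Prop) : Prop :=
  exists d, sym_fun X d /\ is_metric_on X d /\
    forall U, sym_set U -> (forall a, U a -> X a) ->
      (metric_open X d U <-> open U).

(* the indexed family n |-> F n belongs to N_R and is injective (denumerable) *)
Definition denumerable_family_in_N (F : nat -> atom -> Prop) : Prop :=
  (exists S : list nat, forall p, inG p -> fixes p S ->
     forall n a, F n (p a) <-> F n a) /\
  (forall n m, (forall a, F n a <-> F m a) -> n = m).

Definition dist (a b : atom) : R := Rabs (snd a - snd b).

(* the family n |-> d_n belongs to N_R *)
Definition metric_family_in_N : Prop :=
  exists S : list nat, forall p, inG p -> fixes p S ->
    forall n a b, A_ n a -> A_ n b -> dist (p a) (p b) = dist a b.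

(* Every order-automorphism of (A_n, <=_n) is available in the model, and the
   dilations x |-> lam * x of a single A_n fix every support avoiding n.  The
   metric d_n is invariant only under translations, so the family (d_n) has no
   finite support.  For the direct sum, a metric d with finite support S is
   invariant under the dilations of some A_n with n outside S; these act
   transitively on the positive and on the negative atoms of A_n while fixing
   a_{n,0}, so d(a_{n,0}, -) takes only two (nonzero) values on A_n \ {a_{n,0}}.
   Since A_n is open in the sum, {a_{n,0}} is then d-open; it has support {n},
   yet it is not open in the order topology. *)
From Pilot Require Import Defs.
From Stdlib Require Import Reals List Lra Lia.
Open Scope R_scope.

Lemma exists_not_In (l : list nat) : exists n, ~ In n l.
Proof.
  exists (S (list_max l)); intros Hin.
  assert (Hle := proj1 (list_max_le l (list_max l)) (le_n _)).
  rewrite Forall_forall in Hle; specialize (Hle _ Hin); lia.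
Qed.

Lemma inG_fst (p : atom -> atom) (a : atom) : inG p -> fst (p a) = fst a.
Proof. intros [f [_ Hf]]; rewrite Hf; reflexivity. Qed.

Lemma A_inG_invariant (p : atom -> atom) (n : nat) (a : atom) :
  inG p -> A_ n (p a) <-> A_ n a.
Proof. intros Hp; unfold A_; rewrite inG_fst by exact Hp; tauto. Qed.

Definition scale (n : nat) (lam : R) (a : atom) : atom :=
  if Nat.eq_dec (fst a) n then (fst a, lam * snd a) else a.

Lemma scale_at (n : nat) (lam x : R) : scale n lam (n, x) = (n, lam * x).
Proof. unfold scale; simpl; destruct (Nat.eq_dec n n); congruence. Qed.

Lemma scale_inG (n : nat) (lam : R) : 0 < lam -> inG (scale n lam).
Proof.
  intros Hlam.
  exists (fun m x => if Nat.eq_dec m n then lam * x else x); split.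
  - intros m; destruct (Nat.eq_dec m n); split.
    + intros x y; split; intros H.
      * apply Rmult_le_compat_l; lra.
      * apply (Rmult_le_reg_l lam); lra.
    + intros y; exists (y / lam); field; lra.
    + tauto.
    + intros y; exists y; reflexivity.
  - intros [m x]; unfold scale; simpl; destruct (Nat.eq_dec m n); reflexivity.
Qed.

Lemma scale_fixes (n : nat) (lam : R) (S : list nat) :
  ~ In n S -> fixes (scale n lam) S.
Proof.
  intros Hn a Ha; unfold scale.
  destruct (Nat.eq_dec (fst a) n) as [Heq|]; [rewrite Heq in Ha; contradiction|].
  reflexivity.
Qed.

Lemma dist_sym_fun (n : nat) : sym_fun (A_ n) Defs.dist.
Proof.
  exists (n :: nil); intros p _ Hfix a b Ha Hb.
  rewrite (Hfix a), (Hfix b) by (left; symmetry; assumption); reflexivity.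
Qed.

Lemma dist_is_metric_on (n : nat) : is_metric_on (A_ n) Defs.dist.
Proof.
  unfold Defs.dist, A_; split; [|split; [|split]].
  - intros; apply Rabs_pos.
  - intros [m x] [k y] Ha Hb; simpl in *; subst; split.
    + intros H; f_equal; revert H; unfold Rabs; destruct (Rcase_abs _); lra.
    + intros H; injection H as ->; rewrite Rminus_diag; apply Rabs_R0.
  - intros; apply Rabs_minus_sym.
  - intros a b c _ _ _; apply (R_dist_tri (snd a) (snd c) (snd b)).
Qed.

Lemma metric_open_dist_order_open (n : nat) (U : atom -> Prop) :
  metric_open (A_ n) Defs.dist U <-> order_open n U.
Proof.
  split; intros [HU Hopen]; split; try exact HU; intros a Ha.
  - destruct (Hopen a Ha) as [e [He Hball]].
    exists (snd a - e), (snd a + e); split; [lra|].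
    intros b Hb Hlu; apply Hball; [exact Hb|].
    unfold Defs.dist; apply Rabs_def1; lra.
  - destruct (Hopen a Ha) as [l [u [Hlu Hint]]].
    exists (Rmin (snd a - l) (u - snd a)); split; [apply Rmin_glb_lt; lra|].
    intros b Hb Hd; apply Hint; [exact Hb|].
    unfold Defs.dist in Hd; apply Rabs_def2 in Hd.
    pose proof (Rmin_l (snd a - l) (u - snd a)).
    pose proof (Rmin_r (snd a - l) (u - snd a)); lra.
Qed.

Lemma A_metrizable (n : nat) : metrizable_in_N (A_ n) (order_open n).
Proof.
  exists Defs.dist; split; [apply dist_sym_fun|split; [apply dist_is_metric_on|]].
  intros U _ _; apply metric_open_dist_order_open.
Qed.

Lemma A_denumerable : denumerable_family_in_N A_.
Proof.
  split.
  - exists nil; intros p Hp _ n a; apply A_inG_invariant, Hp.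
  - intros n m H; apply (proj1 (H (n, 0))); reflexivity.
Qed.

Lemma not_metric_family_in_N : ~ metric_family_in_N.
Proof.
  intros [S HS]; destruct (exists_not_In S) as [n Hn].
  assert (H := HS (scale n 2) (scale_inG n 2 ltac:(lra)) (scale_fixes n 2 S Hn)
                  n (n, 0) (n, 1) eq_refl eq_refl).
  rewrite !scale_at in H; unfold Defs.dist in H; simpl in H.
  rewrite Rmult_0_r, Rmult_1_r, !Rminus_0_l, !Rabs_Ropp, Rabs_R1 in H.
  rewrite Rabs_pos_eq in H; lra.
Qed.

Lemma sym_metric_isolates_origin (d : atom -> atom -> R) :
  sym_fun allA d -> is_metric_on allA d ->
  exists n r, 0 < r /\ forall y, y <> 0 -> r <= d (n, 0) (n, y).
Proof.
  intros [S HS] [Hpos [Hzero _]].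
  destruct (exists_not_In S) as [n Hn].
  assert (Hdil : forall lam x, 0 < lam -> d (n, 0) (n, lam * x) = d (n, 0) (n, x)).
  { intros lam x Hlam.
    rewrite <- (HS (scale n lam) (scale_inG n lam Hlam) (scale_fixes n lam S Hn)
                  (n, 0) (n, x) I I), !scale_at, Rmult_0_r.
    reflexivity. }
  assert (Hpos_off_origin : forall s, s <> 0 -> 0 < d (n, 0) (n, s)).
  { intros s Hs; destruct (Hpos (n, 0) (n, s) I I) as [Hlt|Heq]; [exact Hlt|].
    symmetry in Heq; apply (Hzero _ _ I I) in Heq; injection Heq; lra. }
  exists n, (Rmin (d (n, 0) (n, 1)) (d (n, 0) (n, -1))); split.
  - apply Rmin_glb_lt; apply Hpos_off_origin; lra.
  - intros y Hy; destruct (Rlt_or_le 0 y) as [Hy0|Hy0].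
    + rewrite <- (Rmult_1_r y), Hdil by exact Hy0; apply Rmin_l.
    + replace y with (- y * -1) by ring; rewrite Hdil by lra; apply Rmin_r.
Qed.

Lemma A_sym_set (n : nat) : sym_set (A_ n).
Proof. exists nil; intros p Hp _ a; apply A_inG_invariant, Hp. Qed.

Lemma A_sum_open (n : nat) : sum_open (A_ n).
Proof.
  intros m; split; [tauto|]; intros a [Ha Ham].
  exists (snd a - 1), (snd a + 1); split; [lra|].
  intros b Hb _; split; [unfold A_ in *; congruence|exact Hb].
Qed.

Lemma singleton_sym_set (a : atom) : sym_set (fun b => b = a).
Proof.
  exists (fst a :: nil); intros p Hp Hfix b; split.
  - intros Hpb; rewrite Hfix in Hpb; [exact Hpb|].
    left; rewrite <- (inG_fst p b Hp), Hpb; reflexivity.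
  - intros ->; apply Hfix; left; reflexivity.
Qed.

Lemma singleton_not_sum_open (a : atom) : ~ sum_open (fun b => b = a).
Proof.
  intros Hopen; destruct (Hopen (fst a)) as [_ Hint].
  destruct (Hint a (conj eq_refl eq_refl)) as [l [u [Hlu Hb]]].
  destruct (Hb (fst a, (snd a + u) / 2) eq_refl) as [Heq _]; [simpl; lra|].
  apply (f_equal snd) in Heq; simpl in Heq; lra.
Qed.

Lemma sum_not_metrizable : ~ metrizable_in_N allA sum_open.
Proof.
  intros [d [Hsym [Hmetric Hopen]]].
  destruct (sym_metric_isolates_origin d Hsym Hmetric) as [n [r [Hr Hiso]]].
  assert (HA : metric_open allA d (A_ n))
    by (apply Hopen; [apply A_sym_set|intros; exact I|apply A_sum_open]).
  destruct HA as [_ HA]; destruct (HA (n, 0) eq_refl) as [e [He Hball]].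
  apply (singleton_not_sum_open (n, 0)).
  apply Hopen; [apply singleton_sym_set|intros; exact I|].
  split; [intros; exact I|]; intros a ->.
  exists (Rmin e r); split; [apply Rmin_glb_lt; assumption|].
  intros [m y] _ Hd.
  pose proof (Rmin_l e r); pose proof (Rmin_r e r).
  assert (Hm : A_ n (m, y)) by (apply Hball; [exact I|lra]).
  unfold A_ in Hm; simpl in Hm; subst m.
  destruct (Req_dec y 0) as [->|Hy]; [reflexivity|].
  specialize (Hiso y Hy); lra.
Qed.

Theorem proposition3p10 :
  (forall n : nat, metrizable_in_N (A_ n) (order_open n)) /\
  denumerable_family_in_N A_ /\
  ~ metrizable_in_N allA sum_open /\
  ~ metric_family_in_N.
Proof.
  split; [exact A_metrizable|].
  split; [exact A_denumerable|].
  split; [exact sum_not_metrizable|exact not_metric_family_in_N].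
Qed.
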